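(* For every integer $l\ge1$, let $\mathcal{I}_6(l)$ be the index coding instance on $[4l+1]$ with $A_{2i-1}=\{2j: j\in[2l]\setminus\{i\}\}\cup\{4l+1\}$ and $A_{2i}=\{2i-1\}$ for $i\in[2l]$, and $A_{4l+1}=\{2i-1: i\in[2l]\}$. Then the UMCD coding scheme is optimal for $\mathcal{I}_6(l)$, i.e. $\beta(\mathcal{I}_6(l))=\beta_{\text{UMCD}}(\mathcal{I}_6(l))$.
   Context: Index coding: messages $x_i\in\mathbb{F}_q^t$; receiver $i$ wants $x_i$ and knows $x_j$, $j\in A_i\subseteq[m]\setminus\{i\}$. A $(t,r)$ index code is an encoder $\phi:\mathbb{F}_q^{mt}\to\mathbb{F}_q^r$ plus decoders $\psi_i$ with $\psi_i(\phi(x),(x_j)_{j\in A_i})=x_i$ for all messages and all $i$; $\beta(\mathcal{I})$ is the infimum of $r/t$ over all $t$ and all such codes (over finite fields). $B_i=[m]\setminus(A_i\cup\{i\})$. For a $0/1$ matrix $\boldsymbol{G}$, $\boldsymbol{G}_{[k]}^L$ is the submatrix of its first $k$ rows and columns $L$; $\mathrm{mcm}$ is the maximum number of $1$-entries in distinct rows and columns (0 if no columns). UMCD algorithm: $N=[m]$, $k=0$; while $N\neq\emptyset$: $k\leftarrow k+1$; pick $w\in N$ minimizing $|A_w|$ over $N$ (arbitrary tie-breaking); row $k$ of $\boldsymbol{G}$ is the indicator of $\{w\}\cup A_w$; remove $w$ from $N$; remove every $i\in N$ with $\mathrm{mcm}(\boldsymbol{G}_{[k]}^{\{i\}\cup B_i})=\mathrm{mcm}(\boldsymbol{G}_{[k]}^{B_i})+1$;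 output $\beta_{\text{UMCD}}=k$. *)

From HB Require Import structures.
From mathcomp Require Import all_boot all_order all_algebra.
Set Implicit Arguments. Unset Strict Implicit. Unset Printing Implicit Defensive.
Import GRing.Theory.

(* Receivers/messages are indexed by 'I_m (0-based: receiver v is the
   paper's receiver v+1).  An instance is given by the side-information
   sets A : 'I_m -> {set 'I_m}. *)

Definition Bset m (A : 'I_m -> {set 'I_m}) (i : 'I_m) : {set 'I_m} :=
  ~: (A i :|: [set i]).

(* A (t,r) index code over the finite field F: an encoder phi : F^{mt} -> F^r
   and decoders psi_i, where psi_i receives phi(x) and the side information
   (x_j)_{j in A_i} (encoded as the message vector with every coordinate
   outside A_i replaced by 0). *)
Definition is_index_code m (A : 'I_m -> {set 'I_m}) (F : finFieldType) (t r : nat)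
  (phi : ('I_m -> 'rV[F]_t) -> 'rV[F]_r)
  (psi : 'I_m -> 'rV[F]_r -> ('I_m -> 'rV[F]_t) -> 'rV[F]_t) : Prop :=
  forall (x : 'I_m -> 'rV[F]_t) (i : 'I_m),
    psi i (phi x) (fun j => if j \in A i then x j else 0%R) = x i.

Definition has_code m (A : 'I_m -> {set 'I_m}) (t r : nat) : Prop :=
  exists (F : finFieldType) (phi : ('I_m -> 'rV[F]_t) -> 'rV[F]_r)
         (psi : 'I_m -> 'rV[F]_r -> ('I_m -> 'rV[F]_t) -> 'rV[F]_t),
    is_index_code A phi psi.

(* beta(A) = k : the infimum of r/t over all t >= 1 and all (t,r) index codes
   (over all finite fields) equals the natural number k, i.e. k is a lower
   bound of all r/t and for every n >= 1 some r/t < k + 1/n. *)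
Definition beta_eq m (A : 'I_m -> {set 'I_m}) (k : nat) : Prop :=
  (forall t r, 0 < t -> has_code A t r -> k * t <= r) /\
  (forall n, 0 < n -> exists t r, [/\ 0 < t, has_code A t r & n * r < (n * k + 1) * t]).

(* The matrix G with k rows is a sequence of k row supports (row p has 1s
   exactly in the columns of nth set0 G p). *)
Definition is_matching m (G : seq {set 'I_m}) (L : {set 'I_m})
  (M : {set 'I_(size G) * 'I_m}) : bool :=
  [forall p in M, (p.2 \in L) && (p.2 \in nth set0 G p.1)] &&
  [forall p in M, forall q in M, ((p.1 == q.1) || (p.2 == q.2)) ==> (p == q)].

Definition mcm m (G : seq {set 'I_m}) (L : {set 'I_m}) : nat :=
  \max_(M : {set 'I_(size G) * 'I_m} | is_matching L M) #|M|.

Definition umcd_next m (A : 'I_m -> {set 'I_m}) (N : {set 'I_m})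
  (G : seq {set 'I_m}) : {set 'I_m} :=
  [set i in N | mcm G (i |: Bset A i) != (mcm G (Bset A i)).+1].

(* umcd_runs A N G k : starting from the state (N, G), some execution of the
   UMCD loop (with some admissible tie-breaking) terminates with output k
   (= number of rows of the final matrix). *)
Inductive umcd_runs m (A : 'I_m -> {set 'I_m}) :
    {set 'I_m} -> seq {set 'I_m} -> nat -> Prop :=
| umcd_done (G : seq {set 'I_m}) : umcd_runs A set0 G (size G)
| umcd_step (N : {set 'I_m}) (G : seq {set 'I_m}) (w : 'I_m) (k : nat) :
    w \in N ->
    (forall v, v \in N -> #|A w| <= #|A v|) ->
    umcd_runs A (umcd_next A (N :\ w) (rcons G (w |: A w))) (rcons G (w |: A w)) k ->
    umcd_runs A N G k.

Definition umcd_out m (A : 'I_m -> {set 'I_m}) (k : nat) : Prop :=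
  umcd_runs A setT [::] k.

(* Paper's (1-based) side information: q \in A_p. *)
Definition I6_rel (l p q : nat) : bool :=
  if p == 4 * l + 1 then odd q && (q < 4 * l + 1)
  else if odd p then (~~ odd q && (q != p.+1)) || (q == 4 * l + 1)
  else q == p.-1.

Definition I6 (l : nat) : 'I_(4 * l + 1) -> {set 'I_(4 * l + 1)} :=
  fun v => [set x : 'I_(4 * l + 1) | I6_rel l v.+1 x.+1].
Arguments I6 l : clear implicits.

(** The 2l receivers 2i (whose only side information is x_(2i-1)) together
    with receiver 4l+1 form a set S in which no receiver knows any message of
    S.  Fixing all other messages to 0, every receiver of S decodes from the
    codeword alone, so the encoder is injective on the q^(t(2l+1)) messages
    supported on S and r >= (2l+1) t.  The scalar linear code sending
    x_(2i-1) + x_(2i) for i <= 2l and x_(4l+1) + sum_i x_(2i) attains this.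

    UMCD first picks the receivers 2i, which have |A| = 1 while all others have
    |A| = 2l.  While only such rows {2i-1, 2i} have been added, for every
    remaining v they can be matched into distinct columns of B_v, so
    mcm(G^B_v) is already the number of rows and no receiver is removed.  After
    the next pick the matrix has 2l+1 rows and a full matching into {v} u B_v
    for every remaining v, whereas |B_v| = 2l; hence mcm grows when the column
    v is added, all remaining receivers are removed and UMCD outputs 2l+1. *)

From HB Require Import structures.
From mathcomp Require Import all_boot all_order all_algebra.
From mathcomp Require Import zify ring.
From Stdlib Require Import FunctionalExtensionality.
Set Implicit Arguments. Unset Strict Implicit. Unset Printing Implicit Defensive.

Section Matchings.
Variables (m : nat) (G : seq {set 'I_m}).

Lemma matchingP L M : @is_matching _ G L M ->
  {in M, forall p : 'I_(size G) * 'I_m, (p.2 \in L) && (p.2 \in nth set0 G p.1)} /\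
  {in M &, forall p q : 'I_(size G) * 'I_m, (p.1 == q.1) || (p.2 == q.2) -> p = q}.
Proof.
case/andP=> /forallP onL /forallP inj; split=> [p pM | p q pM qM pq].
  by have := onL p; rewrite pM.
by have /forallP/(_ q) := implyP (inj p) pM; rewrite qM pq => /eqP.
Qed.

Lemma matching_le_mcm L M : @is_matching _ G L M -> #|M| <= mcm G L.
Proof. exact: leq_bigmax_cond. Qed.

Lemma mcm_le_size L : mcm G L <= size G.
Proof.
apply/bigmax_leqP => M /matchingP[_ inj].
rewrite -(card_in_imset (f := fst)) => [|p q pM qM pq]; last first.
  by apply: inj; rewrite ?pq ?eqxx.
by rewrite (leq_trans (max_card _)) ?card_ord.
Qed.

Lemma mcm_le_card L : mcm G L <= #|L|.
Proof.
apply/bigmax_leqP => M /matchingP[onL inj].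
rewrite -(card_in_imset (f := snd)) => [|p q pM qM pq]; last first.
  by apply: inj; rewrite ?pq ?eqxx ?orbT.
apply/subset_leq_card/subsetP => _ /imsetP[p pM ->].
by case/andP: (onL p pM).
Qed.

Lemma mcm_setU1 L v : mcm G (v |: L) <= (mcm G L).+1.
Proof.
apply/bigmax_leqP => M matchM; have [onL inj] := matchingP matchM.
set Mv := [set p in M | p.2 == v]; set M' := [set p in M | p.2 != v].
have matchM' : @is_matching _ G L M'.
  apply/andP; split; apply/forallP => p; apply/implyP; rewrite inE => /andP[pM pv].
    by case/andP: (onL p pM); rewrite in_setU1 (negbTE pv) => /= -> ->.
  apply/forallP => q; apply/implyP; rewrite inE => /andP[qM _].
  by apply/implyP => pq; rewrite (inj p q).
have Mv_le1 : #|Mv| <= 1.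
  apply/card_le1_eqP => p q; rewrite !inE => /andP[pM /eqP pv] /andP[qM /eqP qv].
  by apply: inj; rewrite ?pv ?qv ?eqxx ?orbT.
have -> : M = M' :|: Mv by apply/setP => p; rewrite !inE -andb_orr orNb andbT.
apply: leq_trans (leq_card_setU _ _) _.
by rewrite -addn1 leq_add ?matching_le_mcm.
Qed.

Lemma size_le_mcm L (f : 'I_(size G) -> 'I_m) :
  injective f -> (forall p, f p \in nth set0 G p :&: L) -> size G <= mcm G L.
Proof.
move=> f_inj fGL; set M := [set (p, f p) | p : 'I_(size G)].
have matchM : @is_matching _ G L M.
  apply/andP; split; apply/forallP => x; apply/implyP => /imsetP[p _ ->] /=.
    by have := fGL p; rewrite inE andbC.
  apply/forallP => y; apply/implyP => /imsetP[q _ ->] /=.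
  by apply/implyP => /orP[] /eqP pq; rewrite ?(f_inj _ _ pq) ?pq.
have := matching_le_mcm matchM; rewrite card_imset ?card_ord //.
by move=> p q [].
Qed.

Lemma mcm_setU1_neq_succ (L : {set 'I_m}) v :
  size G <= mcm G L -> mcm G (v |: L) != (mcm G L).+1.
Proof. by move=> full; have := mcm_le_size (v |: L); lia. Qed.

Lemma mcm_setU1_eq_succ (L : {set 'I_m}) v :
  #|L| < size G -> size G <= mcm G (v |: L) -> mcm G (v |: L) = (mcm G L).+1.
Proof. by move=> small full; have := mcm_setU1 L v; have := mcm_le_card L; lia. Qed.

End Matchings.

Lemma size_le_mcm_map m (R : 'I_m -> {set 'I_m}) (ws : seq 'I_m) L (F : 'I_m -> nat) :
  uniq ws -> {in ws &, injective F} ->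
  {in ws, forall w, F w < m /\ forall x : 'I_m, x = F w :> nat -> x \in R w :&: L} ->
  size ws <= mcm (map R ws) L.
Proof.
case: ws => [//|w0 ws0]; set ws := w0 :: ws0 => ws_uniq F_inj FRL.
have sz : size (map R ws) = size ws by rewrite size_map.
have ws_p (p : 'I_(size (map R ws))) : nth w0 ws p \in ws by rewrite mem_nth -?sz.
have FRL' w : w \in ws -> insubd w0 (F w) \in R w :&: L.
  by move=> wws; have [Fm ->] := FRL w wws; rewrite // val_insubd Fm.
rewrite -sz; apply: (size_le_mcm (f := fun p => insubd w0 (F (nth w0 ws p)))).
  move=> p q /(congr1 val); rewrite !val_insubd.
  have [Fp _] := FRL _ (ws_p p); have [Fq _] := FRL _ (ws_p q); rewrite Fp Fq.
  move/F_inj => /(_ (ws_p p) (ws_p q)) /eqP; rewrite nth_uniq -?sz //.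
  by move/eqP/val_inj.
by move=> p; rewrite (nth_map w0) -?sz //; apply: FRL'.
Qed.

Section UMCD.
Variables (m : nat) (A : 'I_m -> {set 'I_m}).

Lemma umcd_runs_set0 G k : umcd_runs A set0 G k -> k = size G.
Proof.
move E: set0 => N run; case: run E => // N' G' w k' wN _ _ N'0.
by rewrite -N'0 inE in wN.
Qed.

Lemma umcd_runs_exists N G : exists k, umcd_runs A N G k.
Proof.
have [n] := ubnP #|N|; elim: n N G => // n IH N G.
have [-> _ | [v vN] sizeN] := set_0Vmem N; first by exists (size G); apply: umcd_done.
have [w wN wmin] := @arg_minnP _ v (fun u => u \in N) (fun u => #|A u|) vN.
set G' := rcons G (w |: A w).
have [|k run] := IH (umcd_next A (N :\ w) G') G'.
  have next_sub : umcd_next A (N :\ w) G' \subset N :\ w.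
    by apply/subsetP => u; rewrite inE => /andP[].
  by apply: leq_ltn_trans (subset_leq_card next_sub) _; move: sizeN; rewrite (cardsD1 w N) wN.
by exists k; apply: umcd_step run.
Qed.

End UMCD.

Lemma has_code_indep m (A : 'I_m -> {set 'I_m}) (S : {set 'I_m}) t r :
  {in S, forall i, [disjoint A i & S]} -> has_code A t r -> #|S| * t <= r.
Proof.
move=> S_indep [F [phi [psi code]]].
set X := pffun_on (0 : 'rV[F]_t)%R S predT.
have X0 f j : f \in X -> j \notin S -> f j = 0%R.
  case/pffun_onP => /subsetP supp _ jS; apply/eqP/negPn/negP => /supp.
  by rewrite (negbTE jS).
have phi_inj : {in X &, injective (fun f : {ffun 'I_m -> 'rV[F]_t} => phi f)}.
  move=> f g fX gX fg; apply/ffunP => i.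
  have [iS | iS] := boolP (i \in S); last by rewrite !X0.
  rewrite -(code f i) -(code g i) /= fg; congr psi.
  apply: functional_extensionality => j; case: ifP => // jA.
  by rewrite !X0 ?(disjointFr (S_indep i iS) jA).
have := max_card [set phi (f : {ffun _ -> _}) | f in X]; rewrite card_in_imset //.
by rewrite card_pffun_on !card_mx -expnM leq_exp2l ?card_finNzRing_gt1 // !mul1n mulnC.
Qed.

Lemma beta_eq_of_code m (A : 'I_m -> {set 'I_m}) k :
  (forall t r, has_code A t r -> k * t <= r) -> has_code A 1 k -> beta_eq A k.
Proof.
move=> lower code1; split=> [t r _ | n n_gt0]; first exact: lower.
by exists 1, k; split=> //; rewrite muln1 addn1.
Qed.

Definition ordn n (k : nat) : 'I_(n + 1) := insubd (rshift n ord0) k.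

Lemma val_ordn n k : k < n + 1 -> ordn n k = k :> nat.
Proof. by move=> lt_k; rewrite val_insubd lt_k. Qed.

Lemma eq_ordn n (x : 'I_(n + 1)) k : k < n + 1 -> (x == ordn n k) = (x == k :> nat).
Proof. by move=> lt_k; rewrite -val_eqE /= val_ordn. Qed.

Lemma in_setU1_ord m (v x : 'I_m) (A : {set 'I_m}) :
  (x \in v |: A) = (x == v :> nat) || (x \in A).
Proof. exact: in_setU1. Qed.

Lemma in_Bset m (A : 'I_m -> {set 'I_m}) v x :
  (x \in Bset A v) = (x != v :> nat) && (x \notin A v).
Proof. by rewrite !inE negb_or andbC. Qed.

Lemma card_Bset m (A : 'I_m -> {set 'I_m}) v : v \notin A v -> #|Bset A v| = m - #|A v|.+1.
Proof. by move=> vA; rewrite cardsCs setCK card_ord setUC cardsU1 vA. Qed.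

Ltac lia_ifs := repeat case: ifP => ?; lia.

Section InstanceI6.
Variable l : nat.
Implicit Types (v w x : 'I_(4 * l + 1)) (ws : seq 'I_(4 * l + 1)).

(* With 0-based receivers, [odds] are the paper's receivers 2i and [hub] is
   receiver 4l+1. *)
Definition hub : 'I_(4 * l + 1) := rshift (4 * l) ord0.
Definition odds : {set 'I_(4 * l + 1)} := [set x : 'I_(4 * l + 1) | odd x].
Definition rows ws := [seq w |: I6 l w | w <- ws].

Lemma eq_hub x : (x == hub) = (x == 4 * l :> nat).
Proof. by rewrite -val_eqE /= addn0. Qed.

Lemma mem_I6_odd v x : odd v -> (x \in I6 l v) = (x == v.-1 :> nat).
Proof.
move=> odd_v; have := ltn_ord v; have := ltn_ord x => lt_x lt_v.
rewrite inE /I6_rel ifF /=; last lia.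
by rewrite odd_v; apply/eqP/eqP; lia.
Qed.

Lemma mem_I6_even v x : ~~ odd v -> v < 4 * l ->
  (x \in I6 l v) = odd x && (x != v.+1 :> nat) || (x == 4 * l :> nat).
Proof.
move=> even_v lt_v; have := ltn_ord x => lt_x.
rewrite inE /I6_rel ifF /=; last lia.
by rewrite even_v /= negbK eqSS; congr (_ || _); apply/eqP/eqP; lia.
Qed.

Lemma mem_I6_hub v x : v = 4 * l :> nat -> (x \in I6 l v) = ~~ odd x && (x < 4 * l).
Proof.
move=> v_hub; have := ltn_ord x => lt_x.
by rewrite inE /I6_rel ifT /=; [congr (_ && _); lia | lia].
Qed.

Lemma I6_irrefl v : v \notin I6 l v.
Proof.
have := ltn_ord v => lt_v; have [odd_v | even_v] := boolP (odd v).
  by rewrite mem_I6_odd //; lia.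
have [lt_v_hub | ge_v_hub] := ltnP v (4 * l).
  by rewrite mem_I6_even //; lia.
by rewrite mem_I6_hub; lia.
Qed.

Lemma card_odds : #|odds| = 2 * l.
Proof.
have -> : odds = [set ordn _ (2 * b + 1) | b : 'I_(2 * l)].
  apply/setP => x; rewrite inE; apply/idP/imsetP => [odd_x | [b _ ->]].
    have lt_b : x %/ 2 < 2 * l by have := ltn_ord x; lia.
    by exists (Ordinal lt_b) => //; apply/ord_inj; rewrite val_ordn /=; lia.
  by have := ltn_ord b => lt_b; rewrite val_ordn; lia.
rewrite card_imset ?card_ord // => a b /(congr1 (@nat_of_ord _)).
have := ltn_ord a; have := ltn_ord b => lt_b lt_a.
by rewrite !val_ordn => [?||]; [apply/ord_inj|..]; lia.
Qed.

Lemma card_hub_odds : #|hub |: odds| = 2 * l + 1.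
Proof. by rewrite cardsU1 card_odds inE /= addn0 (_ : odd (4 * l) = false) /=; lia. Qed.

Lemma card_I6_odd v : odd v -> #|I6 l v| = 1.
Proof.
move=> odd_v; have := ltn_ord v => lt_v.
have -> : I6 l v = [set ordn _ v.-1].
  apply/setP => x; rewrite in_set1 mem_I6_odd //.
  by apply/eqP/eqP => [x_v | ->]; [apply/ord_inj|]; rewrite val_ordn //; lia.
exact: cards1.
Qed.

Lemma card_I6_even v : ~~ odd v -> #|I6 l v| = 2 * l.
Proof.
move=> even_v; have := ltn_ord v => lt_v.
have [lt_v_hub | ge_v_hub] := ltnP v (4 * l).
  have -> : I6 l v = hub |: (odds :\ ordn _ v.+1).
    apply/setP => x; rewrite mem_I6_even // !inE eq_hub eq_ordn; last lia.
    by rewrite orbC andbC.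
  have := cardsD1 (ordn _ v.+1) odds; rewrite card_odds inE val_ordn; last lia.
  by rewrite cardsU1 !inE /= addn0 (_ : odd (4 * l) = false) ?andbF ?even_v => [-> //|]; lia.
have -> : I6 l v = ~: (hub |: odds).
  apply/setP => x; rewrite mem_I6_hub; last lia.
  by rewrite !inE eq_hub; have := ltn_ord x; lia.
by rewrite cardsCs setCK card_ord card_hub_odds; lia.
Qed.

Lemma card_Bset_even v : ~~ odd v -> #|Bset (I6 l) v| = 2 * l.
Proof. by move=> even_v; rewrite card_Bset ?I6_irrefl // card_I6_even //; lia. Qed.

Lemma I6_indep : {in hub |: odds, forall i, [disjoint I6 l i & hub |: odds]}.
Proof.
move=> i; rewrite !inE eq_hub => i_S; rewrite -setI_eq0; apply/eqP/setP => j.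
have := ltn_ord i; have := ltn_ord j => lt_j lt_i.
case/orP: i_S => [/eqP i_hub | odd_i].
  by rewrite in_setI mem_I6_hub // !inE eq_hub; lia.
by rewrite in_setI mem_I6_odd // !inE eq_hub; lia.
Qed.

Lemma has_code_I6_ge t r : has_code (I6 l) t r -> (2 * l + 1) * t <= r.
Proof. by move/(has_code_indep I6_indep); rewrite card_hub_odds. Qed.

Section LinearCode.
Variable K : finFieldType.
Local Open Scope ring_scope.
Local Notation message := ('I_(4 * l + 1) -> 'rV[K]_1).

Definition msg (x : message) (n : nat) : K := x (ordn _ n) 0 0.

Definition I6_enc (x : message) : 'rV[K]_(2 * l + 1) :=
  \row_(k < 2 * l + 1) if (k < 2 * l)%N then msg x (2 * k) + msg x (2 * k + 1)
                       else msg x (4 * l) + \sum_(b < 2 * l) msg x (2 * b + 1).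

(* Receiver 2b+1 subtracts its known partner from y_b; receiver 2b first
   recovers x_(2b+1) from the last symbol, whose other summands it knows; the
   hub recovers every x_(2b+1) from the pair sums, then its own message. *)
Definition I6_dec (i : 'I_(4 * l + 1)) (y : 'rV[K]_(2 * l + 1)) (z : message) : 'rV[K]_1 :=
  let c k := y 0 (ordn _ k) in
  const_mx (if odd i then c (i %/ 2)%N - msg z i.-1
   else if (i < 4 * l)%N then
     c (i %/ 2)%N - (c (2 * l)%N - msg z (4 * l) - \sum_(b < 2 * l) msg z (2 * b + 1))
   else c (2 * l)%N - \sum_(b < 2 * l) (c b - msg z (2 * b))).

Lemma I6_enc_ordn (x : message) k : (k < 2 * l + 1)%N -> I6_enc x 0 (ordn _ k) =
  if (k < 2 * l)%N then msg x (2 * k) + msg x (2 * k + 1)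
  else msg x (4 * l) + \sum_(b < 2 * l) msg x (2 * b + 1).
Proof. by move=> lt_k; rewrite mxE val_ordn. Qed.

Lemma I6_code_correct : is_index_code (I6 l) I6_enc I6_dec.
Proof.
move=> x i; set z := fun j => if j \in I6 l i then x j else 0.
have lt_i := ltn_ord i.
have msg_z n : msg z n = if ordn _ n \in I6 l i then msg x n else 0.
  by rewrite /msg /z; case: ifP; rewrite ?mxE.
have msg_i : x i 0 0 = msg x i.
  by rewrite /msg; congr (x _ _ _); apply/ord_inj; rewrite val_ordn.
apply/matrixP => r c; rewrite !ord1 mxE msg_i /=.
have [odd_i | even_i] := boolP (odd i).
  rewrite I6_enc_ordn; last lia.
  rewrite ifT; last lia.
  rewrite msg_z mem_I6_odd // val_ordn ?eqxx; last lia.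
  rewrite (_ : (2 * _)%N = i.-1); last lia.
  by rewrite (_ : (i.-1 + 1)%N = i); [ring | lia].
have [lt_i_hub | ge_i_hub] := ltnP i (4 * l).
  have lt_half : (i %/ 2 < 2 * l)%N by lia.
  have odd_sum : \sum_(b < 2 * l) msg z (2 * b + 1) =
                 \sum_(b < 2 * l) msg x (2 * b + 1) - msg x i.+1.
    rewrite (bigD1 (Ordinal lt_half)) // [in RHS](bigD1 (Ordinal lt_half)) //=.
    rewrite (_ : (2 * _ + 1)%N = i.+1); last lia.
    rewrite msg_z mem_I6_even // val_ordn; last lia.
    rewrite ifF; last lia.
    rewrite (eq_bigr (fun b : 'I_(2 * l) => msg x (2 * b + 1))); first by ring.
    move=> b ne_b; have := ltn_ord b => lt_b.
    have ne_b' : nat_of_ord b != (i %/ 2)%N.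
      by apply: contra ne_b => /eqP e; apply/eqP/ord_inj.
    rewrite msg_z mem_I6_even // val_ordn; last lia.
    by rewrite ifT //; lia.
  rewrite odd_sum !I6_enc_ordn; [|lia|lia].
  rewrite ifT; last lia.
  rewrite ifF; last lia.
  rewrite msg_z mem_I6_even // val_ordn; last lia.
  rewrite ifT; last lia.
  rewrite (_ : (2 * _)%N = nat_of_ord i); last lia.
  by rewrite (_ : (nat_of_ord i + 1)%N = i.+1); [ring | lia].
have i_hub : nat_of_ord i = (4 * l)%N by lia.
rewrite I6_enc_ordn; last lia.
rewrite ifF; last lia.
rewrite (eq_bigr (fun b : 'I_(2 * l) => msg x (2 * b + 1))); first by rewrite i_hub; ring.
move=> b _; have := ltn_ord b => lt_b.
rewrite I6_enc_ordn; last lia.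
rewrite ifT; last lia.
rewrite msg_z mem_I6_hub // val_ordn; last lia.
by rewrite ifT; [ring | lia].
Qed.

End LinearCode.

Lemma has_code_I6 : has_code (I6 l) 1 (2 * l + 1).
Proof. by exists 'F_2, (@I6_enc _), (@I6_dec _); apply: I6_code_correct. Qed.

Lemma size_rows ws : size (rows ws) = size ws.
Proof. exact: size_map. Qed.

Lemma rows_rcons ws w : rows (rcons ws w) = rcons (rows ws) (w |: I6 l w).
Proof. exact: map_rcons. Qed.

Lemma size_eq_odds ws : uniq ws -> ws =i odds -> size ws = 2 * l.
Proof. by move=> ws_uniq ws_odds; rewrite -(card_uniqP ws_uniq) -card_odds; apply: eq_card. Qed.

Lemma mcm_odd_rows_Bset ws v : uniq ws -> {subset ws <= odds} -> v \notin ws ->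
  size ws <= mcm (rows ws) (Bset (I6 l) v).
Proof.
move=> ws_uniq ws_odd v_ws; rewrite /rows; have lt_v := ltn_ord v.
have ws_facts w : w \in ws -> [/\ odd w, w != v :> nat & w < 4 * l + 1].
  move=> w_ws; have := ws_odd w w_ws; rewrite inE => ->; split=> //.
  by apply: contraNneq v_ws => /ord_inj <-.
have [odd_v | even_v] := boolP (odd v).
  apply: (size_le_mcm_map (F := fun w => nat_of_ord w)) => // [? ? _ _ /ord_inj //|].
  move=> w /ws_facts[odd_w ne_wv lt_w].
  by split=> // x /= x_w; rewrite in_setI in_setU1_ord in_Bset !mem_I6_odd //; lia.
have [lt_v_hub | ge_v_hub] := ltnP v (4 * l).
  pose F w := if w == v.+1 :> nat then nat_of_ord w else w.-1.
  apply: (size_le_mcm_map (F := F)) => //.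
    move=> w1 w2 /ws_facts[odd1 _ _] /ws_facts[odd2 _ _]; rewrite /F => F12.
    by apply/ord_inj; move: F12; lia_ifs.
  move=> w /ws_facts[odd_w ne_wv lt_w]; rewrite /F; split; first by lia_ifs.
  move=> x x_w; rewrite in_setI in_setU1_ord in_Bset mem_I6_odd // mem_I6_even //.
  by move: x_w; lia_ifs.
apply: (size_le_mcm_map (F := fun w => nat_of_ord w)) => // [? ? _ _ /ord_inj //|].
move=> w /ws_facts[odd_w ne_wv lt_w].
by split=> // x /= x_w; rewrite in_setI in_setU1_ord in_Bset mem_I6_odd // mem_I6_hub; lia.
Qed.

Lemma mcm_full_rows_setU1_Bset ws w v :
  uniq ws -> ws =i odds -> ~~ odd w -> ~~ odd v -> v != w ->
  size (rcons ws w) <= mcm (rows (rcons ws w)) (v |: Bset (I6 l) v).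
Proof.
move=> ws_uniq ws_odds even_w even_v ne_vw; rewrite /rows.
have lt_v := ltn_ord v; have lt_w := ltn_ord w.
have ne_vw' : v != w :> nat by [].
have ws'_uniq : uniq (rcons ws w) by rewrite rcons_uniq ws_odds inE even_w.
have ws'_facts u : u \in rcons ws w -> u = w \/ odd u /\ u < 4 * l + 1.
  by rewrite mem_rcons in_cons ws_odds inE => /predU1P[|]; [left | right; split].
have [lt_w_hub | ge_w_hub] := ltnP w (4 * l); last first.
  have lt_v_hub : v < 4 * l by lia.
  pose F (u : 'I_(4 * l + 1)) :=
    if u == 4 * l :> nat then nat_of_ord v else if u == v.+1 :> nat then nat_of_ord u else u.-1.
  apply: (size_le_mcm_map (F := F)) => //.
    move=> u1 u2 /ws'_facts[->|[odd1 _]] /ws'_facts[->|[odd2 _]] //;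
      by rewrite /F => F12; apply/ord_inj; move: F12; lia_ifs.
  move=> u /ws'_facts[->|[odd_u lt_u]]; rewrite /F; split; try lia_ifs;
    move=> x x_u; rewrite in_setI !in_setU1_ord in_Bset; move: x_u.
    by rewrite mem_I6_hub ?mem_I6_even //; lia_ifs.
  by rewrite mem_I6_odd ?mem_I6_even //; lia_ifs.
have [lt_v_hub | ge_v_hub] := ltnP v (4 * l).
  pose F (u : 'I_(4 * l + 1)) := if u == w :> nat then v.+1 else u.-1.
  apply: (size_le_mcm_map (F := F)) => //.
    move=> u1 u2 /ws'_facts[->|[odd1 _]] /ws'_facts[->|[odd2 _]] //;
      by rewrite /F => F12; apply/ord_inj; move: F12; lia_ifs.
  move=> u /ws'_facts[->|[odd_u lt_u]]; rewrite /F; split; try lia_ifs;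
    move=> x x_u; rewrite in_setI !in_setU1_ord in_Bset; move: x_u.
    by rewrite !mem_I6_even //; lia_ifs.
  by rewrite mem_I6_odd ?mem_I6_even //; lia_ifs.
pose F (u : 'I_(4 * l + 1)) := if u == w :> nat then 4 * l else nat_of_ord u.
apply: (size_le_mcm_map (F := F)) => //.
  move=> u1 u2 /ws'_facts[->|[odd1 _]] /ws'_facts[->|[odd2 _]] //;
    by rewrite /F => F12; apply/ord_inj; move: F12; lia_ifs.
move=> u /ws'_facts[->|[odd_u lt_u]]; rewrite /F; split; try lia_ifs;
  move=> x x_u; rewrite in_setI !in_setU1_ord in_Bset; move: x_u.
  by rewrite mem_I6_even // mem_I6_hub //; lia_ifs.
by rewrite mem_I6_odd // mem_I6_hub //; lia_ifs.
Qed.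

Lemma umcd_next_odd ws w : uniq (rcons ws w) -> {subset rcons ws w <= odds} ->
  umcd_next (I6 l) ([set v | v \notin ws] :\ w) (rows (rcons ws w)) =
  [set v | v \notin rcons ws w].
Proof.
move=> ws'_uniq ws'_odd; apply/setP => v.
rewrite /umcd_next !inE [in RHS]mem_rcons in_cons negb_or.
apply/andb_idr => v_ws'; apply: mcm_setU1_neq_succ.
by rewrite size_rows mcm_odd_rows_Bset // mem_rcons in_cons negb_or.
Qed.

Lemma umcd_next_even ws w : uniq ws -> ws =i odds -> ~~ odd w ->
  umcd_next (I6 l) ([set v | v \notin ws] :\ w) (rows (rcons ws w)) = set0.
Proof.
move=> ws_uniq ws_odds even_w; apply/setP => v; rewrite /umcd_next !inE ws_odds inE.
apply/negbTE/negP => /andP[/andP[ne_vw even_v] /eqP[]].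
apply: mcm_setU1_eq_succ; rewrite size_rows ?mcm_full_rows_setU1_Bset // size_rcons.
by rewrite card_Bset_even // (size_eq_odds ws_uniq ws_odds).
Qed.

Lemma umcd_runs_I6 ws k : 0 < l -> uniq ws -> {subset ws <= odds} ->
  umcd_runs (I6 l) [set v | v \notin ws] (rows ws) k -> k = 2 * l + 1.
Proof.
move=> l_gt0 ws_uniq ws_odd; move Nws: [set v | v \notin ws] => N.
move Gws: (rows ws) => G run.
elim: run ws Nws Gws ws_uniq ws_odd => [G0 | N0 G0 w k' w_N w_min run IH] ws Nws Gws
  ws_uniq ws_odd.
  have : hub \in [set v | v \notin ws].
    by rewrite inE; apply/negP => /ws_odd; rewrite inE /= addn0; lia.
  by rewrite Nws inE.
subst N0 G0; have w_ws : w \notin ws by rewrite inE in w_N.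
have [odds_ws | /subsetPn[x odd_x x_ws]] := boolP (odds \subset ws).
  have ws_odds : ws =i odds.
    by move=> u; apply/idP/idP => [/ws_odd | /(subsetP odds_ws)].
  have even_w : ~~ odd w.
    by apply: contra w_ws => odd_w; apply: (subsetP odds_ws); rewrite inE.
  rewrite -rows_rcons umcd_next_even // in run.
  by rewrite (umcd_runs_set0 run) size_rows size_rcons (size_eq_odds ws_uniq ws_odds) addn1.
have odd_w : odd w.
  rewrite inE in odd_x; apply: contraTT (w_min x _); last by rewrite inE.
  by move=> even_w; rewrite card_I6_even // card_I6_odd //; lia.
have ws'_uniq : uniq (rcons ws w) by rewrite rcons_uniq w_ws.
have ws'_odd : {subset rcons ws w <= odds}.
  by move=> u; rewrite mem_rcons in_cons => /predU1P[->|/ws_odd]; rewrite ?inE.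
by apply: (IH (rcons ws w)); rewrite -?rows_rcons ?umcd_next_odd.
Qed.

End InstanceI6.

Theorem proposition10 (l : nat) : 0 < l ->
  (exists k, umcd_out (I6 l) k) /\
  (forall k, umcd_out (I6 l) k -> beta_eq (I6 l) k).
Proof.
move=> l_gt0; split; first exact: umcd_runs_exists.
move=> k run; have -> : k = 2 * l + 1.
  have setT_nil : [set: 'I_(4 * l + 1)] = [set v | v \notin [::]].
    by apply/setP => v; rewrite !inE.
  by apply: (@umcd_runs_I6 l [::]); rewrite // -setT_nil.
exact: beta_eq_of_code (@has_code_I6_ge l) (has_code_I6 l).
Qed.
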